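(* Let $\tau_0,\tau_1,\tau_2>0$, $\alpha>0$, and let $a\in\mathcal{B}_\alpha$. Then every root of the polynomial $p_a(z)=z^n+a_1z^{n-1}+\dots+a_n$ has modulus less than $\alpha$. Consequently the companion matrix $A=\mathrm{CC}(a)$ has spectral radius $\rho(A)<\alpha$.
   Context: $\mathcal{C}=\{z\in\mathbb{C}:\Re z\ge(1+\tau_0)|\Im z|\}\cap\{z\in\mathbb{C}:\tau_1<\Re z<\tau_2\}$, and $\mathcal{B}_\alpha=\{a\in\mathbb{R}^n:\ p_a(z)/z^n\in\mathcal{C}\text{ for all } z\in\mathbb{C} \text{ with } |z|=\alpha\}$. $\mathrm{CC}(a)$ is the $n\times n$ companion matrix with ones on the superdiagonal, zeros elsewhere in the first $n-1$ rows, and last row $[-a_n,\dots,-a_1]$; its characteristic polynomial is $p_a$. *)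

From HB Require Import structures.
From mathcomp Require Import all_boot all_order all_algebra.
From mathcomp Require Import classical_sets reals.
From mathcomp.real_closed Require Import complex.
Set Implicit Arguments. Unset Strict Implicit. Unset Printing Implicit Defensive.
Import Order.TTheory GRing.Theory Num.Theory.
Local Open Scope ring_scope.

Section Defs.
Variable R : realType.

Definition cmod (z : R[i]) : R := Normc.normc z.

Definition coneC (tau0 tau1 tau2 : R) (z : R[i]) : Prop :=
  (1 + tau0) * `|complex.Im z| <= complex.Re z /\
  tau1 < complex.Re z /\ complex.Re z < tau2.

(* a = (a_1,...,a_n) encoded as a : 'I_n -> R with a i = a_{i+1} *)
Definition p_a (n : nat) (a : 'I_n -> R) : {poly R} :=
  'X^n + \sum_(i < n) (a i)%:P * 'X^(n - i.+1).

Definition p_aC (n : nat) (a : 'I_n -> R) : {poly R[i]} :=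
  map_poly (fun x : R => x%:C%C) (p_a a).

Definition B_alpha (tau0 tau1 tau2 alpha : R) (n : nat) (a : 'I_n -> R) : Prop :=
  forall z : R[i], cmod z = alpha ->
    coneC tau0 tau1 tau2 ((p_aC a).[z] / z ^+ n).

(* companion matrix CC(a): ones on the superdiagonal in rows 0..n-2,
   last row [-a_n, ..., -a_1] *)
Definition CC (n : nat) (a : 'I_n -> R) : 'M[R]_n :=
  \matrix_(i < n, j < n)
    if (i.+1 < n)%N then (if j == i.+1 :> nat then 1 else 0)
    else - a (rev_ord j).

(* spectral radius: sup of moduli of the (complex) eigenvalues; 0 if none *)
Definition spectral_radius (n : nat) (A : 'M[R]_n) : R :=
  sup (fun r : R => exists lam : R[i],
         eigenvalue (map_mx (fun x : R => x%:C%C) A) lam /\ r = cmod lam).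
End Defs.

From HB Require Import structures.
From mathcomp Require Import all_boot all_order all_algebra.
From mathcomp Require Import cyclic separable.
From mathcomp Require cyclotomic.
From mathcomp Require Import boolp classical_sets reals.
From mathcomp.real_closed Require Import complex.
From mathcomp Require Import ring zify.

(* Substitute w = 1/z.  If p_a(z0) = 0 with |z0| > alpha, write p_a = (X - z0) Q
   and let h be the reciprocal polynomial of Q, so that w^n p_a(1/w) = (1 - z0 w) h(w),
   whose real part is at least tau1 on the circle |w| = rho = 1/alpha.  Sample this
   circle at the N-th roots of unity w_k (scaled by rho) with the positive weights
   |1 - z0 w_k|^-2.  Since conj w_k = rho^2 / w_k, each weighted sample equals
   w_k h(w_k) / (w_k - v), where v = conj(z0) rho^2 lies outside the circle, and an
   exact discrete Cauchy formula sums these to N rho^N h(v) / (rho^N - v^N).  The real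
   part of the sum is at least N tau1 / (1 + |z0| rho)^2, while its modulus is
   O(N (|v| / rho)^-N), which is absurd for large N: a discrete minimum principle for
   the harmonic function Re (w^n p_a(1/w)).  A root with |z0| = alpha is excluded
   directly, and the spectral radius bound follows from char_poly (CC a) = p_a. *)

Set Implicit Arguments.
Unset Strict Implicit.
Unset Printing Implicit Defensive.

Import Order.TTheory GRing.Theory Num.Theory.
Local Open Scope complex_scope.
Local Open Scope ring_scope.

Lemma prim_root_exists (F : closedFieldType) N :
  (0 < N)%N -> N%:R != 0 :> F -> exists xi : F, N.-primitive_root xi.
Proof.
move=> N_gt0 N_neq0; pose p : {poly F} := 'X^N - 1.
have [r Dp] := closed_field_poly_normal p.
rewrite (monicP _) ?monicXnsubC // scale1r in Dp.
have r_unity: all N.-unity_root r by apply/allP=> z; rewrite -root_prod_XsubC -Dp.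
have size_r : (N < (size r).+1)%N by rewrite -(size_prod_XsubC r id) -Dp size_XnsubC.
have [|z] := hasP (has_prim_root N_gt0 r_unity _ size_r); last by exists z.
by rewrite -separable_prod_XsubC -Dp cyclotomic.separable_Xn_sub_1.
Qed.

Section RootsOfUnitySums.
Variables (F : fieldType) (N : nat) (xi : F).
Hypothesis prim_xi : N.-primitive_root xi.

Lemma sum_prim_root_expr j :
  \sum_(k < N) (xi ^+ j) ^+ k = if (N %| j)%N then N%:R else 0.
Proof.
case: ifPn => [/dvdnP[m ->] | N_ndvd_j].
  rewrite mulnC exprM (prim_expr_order prim_xi) expr1n.
  by under eq_bigr do rewrite expr1n; rewrite sumr_const card_ord.
have xij_neq1 : xi ^+ j != 1 by rewrite -(prim_order_dvd prim_xi).
have : (xi ^+ j - 1) * \sum_(k < N) (xi ^+ j) ^+ k = 0.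
  by rewrite -subrX1 exprAC (prim_expr_order prim_xi) expr1n subrr.
by move/eqP; rewrite mulf_eq0 subr_eq0 (negPf xij_neq1) => /eqP.
Qed.

Lemma sum_horner_prim_root (P : {poly F}) r : (size P <= N)%N ->
  \sum_(k < N) P.[r * xi ^+ k] = N%:R * P`_0.
Proof.
move=> size_P; have N_gt0 := prim_order_gt0 prim_xi.
under eq_bigr do rewrite (horner_coef_wide _ size_P).
rewrite exchange_big (bigD1 (Ordinal N_gt0)) //= [X in _ + X]big1 ?addr0 => [|j j_neq0].
  by under eq_bigr do rewrite expr0 mulr1; rewrite sumr_const card_ord mulr_natl.
rewrite -mulr_sumr; under eq_bigr do rewrite exprMn -exprM mulnC exprM.
rewrite -mulr_sumr sum_prim_root_expr gtnNdvd ?mulr0 // lt0n.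
by apply: contra j_neq0 => /eqP j0; apply/eqP/val_inj.
Qed.

Lemma exprN_scale_prim_root r k : (r * xi ^+ k) ^+ N = r ^+ N.
Proof. by rewrite exprMn exprAC (prim_expr_order prim_xi) expr1n mulr1. Qed.

Lemma scale_prim_root_subr_neq0 r v k : v ^+ N != r ^+ N -> r * xi ^+ k - v != 0.
Proof. by rewrite subr_eq0; apply: contra => /eqP <-; rewrite exprN_scale_prim_root. Qed.

Lemma sum_inv_sub_prim_root r v : v ^+ N != r ^+ N ->
  \sum_(k < N) (r * xi ^+ k - v)^-1 = N%:R * v ^+ N.-1 / (r ^+ N - v ^+ N).
Proof.
move=> vN_neq; have N_gt0 := prim_order_gt0 prim_xi.
pose S : {poly F} := \poly_(i < N) v ^+ (N.-1 - i).
have S_sub w : S.[w] * (w - v) = w ^+ N - v ^+ N.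
  by rewrite horner_poly mulrC -[w - v]opprB mulNr -subrXX opprB.
have term k : (r * xi ^+ k - v)^-1 = S.[r * xi ^+ k] / (r ^+ N - v ^+ N).
  have D : r ^+ N - v ^+ N = S.[r * xi ^+ k] * (r * xi ^+ k - v).
    by rewrite S_sub exprN_scale_prim_root.
  have S_neq0 : S.[r * xi ^+ k] != 0.
    by move: vN_neq; rewrite eq_sym -subr_eq0 D mulf_eq0 negb_or => /andP[].
  by rewrite D invfM mulrA divff ?mul1r.
under eq_bigr do rewrite term; rewrite -mulr_suml sum_horner_prim_root ?size_poly //.
by rewrite coef_poly N_gt0 subn0.
Qed.

Lemma sum_Cauchy_prim_root (h : {poly F}) r v :
  (size h <= N)%N -> v != 0 -> v ^+ N != r ^+ N ->
  \sum_(k < N) h.[r * xi ^+ k] * (r * xi ^+ k) / (r * xi ^+ k - v)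
    = N%:R * r ^+ N * h.[v] / (r ^+ N - v ^+ N).
Proof.
move=> size_h v_neq0 vN_neq; have N_gt0 := prim_order_gt0 prim_xi.
pose q := (h * 'X) %/ ('X - v%:P).
have hX_eq w : h.[w] * w = q.[w] * (w - v) + v * h.[v].
  rewrite -hornerMX {1}(divp_eq (h * 'X) ('X - v%:P)) modp_XsubC hornerMX.
  by rewrite -/q hornerD hornerM hornerXsubC hornerC [h.[v] * v]mulrC.
have size_q : (size q <= N)%N.
  rewrite size_divp ?polyXsubC_eq0 // size_XsubC subn1.
  apply: leq_trans size_h; rewrite -subn1 leq_subLR add1n.
  by apply: leq_trans (size_polyMleq _ _) _; rewrite size_polyX addn2.
have q0 : q.[0] = h.[v].
  have := hX_eq 0; rewrite mulr0 sub0r mulrN => /esym/eqP.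
  by rewrite addrC subr_eq0 mulrC => /eqP/(mulIf v_neq0).
have term k : h.[r * xi ^+ k] * (r * xi ^+ k) / (r * xi ^+ k - v)
    = q.[r * xi ^+ k] + v * h.[v] * (r * xi ^+ k - v)^-1.
  rewrite hX_eq mulrDl mulfK //; exact: scale_prim_root_subr_neq0.
under eq_bigr do rewrite term; rewrite big_split /= sum_horner_prim_root //.
rewrite -horner_coef0 q0 -mulr_sumr sum_inv_sub_prim_root //.
have vN : v ^+ N = v * v ^+ N.-1 by rewrite -exprS prednK.
by rewrite vN; field; rewrite -vN subr_eq0 eq_sym.
Qed.
End RootsOfUnitySums.

Definition recip_poly {F : nzRingType} n (Q : {poly F}) : {poly F} :=
  \poly_(i < n) Q`_(n.-1 - i).

Lemma horner_recip_poly (F : fieldType) n (Q : {poly F}) W :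
  (size Q <= n)%N -> W != 0 -> Q.[W^-1] * W ^+ n = (recip_poly n Q).[W] * W.
Proof.
move=> size_Q W_neq0; rewrite (horner_coef_wide _ size_Q) horner_poly !mulr_suml.
rewrite [RHS](reindex_inj rev_ord_inj); apply: eq_bigr => j _ /=.
have j_lt_n := ltn_ord j.
have -> : (n.-1 - (n - j.+1) = j)%N by lia.
have -> : W ^+ n = W ^+ (n - j.+1) * W * W ^+ j.
  by rewrite -exprSr -exprD; congr (_ ^+ _); lia.
by rewrite exprVn; field; rewrite expf_neq0.
Qed.

Lemma norm_prim_root (C : numDomainType) N (xi : C) :
  N.-primitive_root xi -> `|xi| = 1.
Proof.
move=> prim_xi; apply/eqP; rewrite -(pexpr_eq1 (prim_order_gt0 prim_xi)) //.
by rewrite -normrX (prim_expr_order prim_xi) normr1.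
Qed.

Lemma div_sqr_norm_sub1M (C : numClosedFieldType) (z0 w : C) :
  w != 0 -> 1 - z0 * w != 0 ->
  (1 - z0 * w) / `|1 - z0 * w| ^+ 2 = w / (w - z0^* * `|w| ^+ 2).
Proof.
move=> w_neq0 d_neq0; have dC_neq0 : (1 - z0 * w)^* != 0 by rewrite conjC_eq0.
have -> : w - z0^* * `|w| ^+ 2 = w * (1 - z0 * w)^*.
  by rewrite normCK rmorphB rmorph1 rmorphM; ring.
by rewrite normCK !invfM !mulrA !divff.
Qed.

Lemma bernoulli_ineq (R : numDomainType) (x : R) m :
  0 <= x -> 1 + m%:R * x <= (1 + x) ^+ m.
Proof.
move=> x_ge0; elim: m => [|m IHm]; first by rewrite mul0r addr0.
rewrite exprSr (le_trans _ (ler_wpM2r _ IHm)) ?addr_ge0 //.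
rewrite -subr_ge0 -natr1.
have -> : (1 + m%:R * x) * (1 + x) - (1 + (m%:R + 1) * x) = m%:R * x * x by ring.
by rewrite !mulr_ge0.
Qed.

Lemma complex_expr_unbounded (R : archiRcfType) (b c : R[i]) :
  1 < b -> c \is Num.real -> exists m, c < b ^+ m.
Proof.
move=> b_gt1 c_real; have b1_gt0 : 0 < b - 1 by rewrite subr_gt0.
pose x := (c - 1) / (b - 1).
have b_real : b \is Num.real by rewrite gtr0_real // (lt_trans ltr01).
have x_real : x \is Num.real by rewrite rpredM ?rpredV ?rpredB ?rpred1.
pose m := Num.bound `|complex.Re x|.
have x_lt_m : x < m%:R.
  rewrite -(RRe_real x_real) -(rmorph_nat (real_complex R)) ltcR.
  exact: le_lt_trans (real_ler_norm (num_real _)) (archi_boundP (normr_ge0 _)).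
exists m; rewrite -[b](subrKC 1) (lt_le_trans _ (bernoulli_ineq _ (ltW b1_gt0))) //.
by rewrite -ltrBlDl -ltr_pdivrMr.
Qed.

Section RootOutsideCircle.
Variables (C : numClosedFieldType) (al tau z0 : C) (n : nat) (Q : {poly C}).
Hypotheses (al_gt0 : 0 < al) (tau_gt0 : 0 < tau) (size_Q : (size Q <= n)%N).
Hypothesis (z0_out : al < `|z0|).
Hypothesis Re_ge : forall z, `|z| = al -> tau <= 'Re (Q.[z] * (z - z0) / z ^+ n).

Let rho := al^-1.
Let b := `|z0| * rho.
(* The reflection of the root 1/z0 of w^n p(1/w) in the circle |w| = rho. *)
Let v := z0^* * rho ^+ 2.
Let h := recip_poly n Q.

Let rho_gt0 : 0 < rho. Proof. by rewrite invr_gt0. Qed.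
Let b_gt1 : 1 < b. Proof. by rewrite ltr_pdivlMr // mul1r. Qed.
Let norm_v : `|v| = b * rho.
Proof. by rewrite normrM norm_conjC normrX gtr0_norm // expr2 mulrA. Qed.

Section Samples.
Variables (N : nat) (xi : C).
Hypotheses (n_le_N : (n <= N)%N) (prim_xi : N.-primitive_root xi).

Let w k := rho * xi ^+ k.

Let norm_w k : `|w k| = rho.
Proof. by rewrite normrM normrX (norm_prim_root prim_xi) expr1n mulr1 gtr0_norm. Qed.

Let w_neq0 k : w k != 0.
Proof. by rewrite -normr_eq0 norm_w gt_eqF. Qed.

Lemma Re_sample_ge k : tau / (1 + b) ^+ 2 <= 'Re (h.[w k] * w k / (w k - v)).
Proof.
pose d := 1 - z0 * w k.
have norm_d : `|d| <= 1 + b.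
  by rewrite (le_trans (ler_normB _ _)) // normr1 normrM norm_w.
have d_gt0 : 0 < `|d|.
  rewrite normr_gt0 subr_eq0; apply: contraTneq b_gt1 => d0.
  by rewrite /b -(norm_w k) -normrM -d0 normr1 ltxx.
have recip_eq : Q.[(w k)^-1] * ((w k)^-1 - z0) / (w k)^-1 ^+ n = d * h.[w k].
  rewrite exprVn invrK mulrAC horner_recip_poly // /d; field; exact: w_neq0.
have term_eq : h.[w k] * w k / (w k - v) = d * h.[w k] / `|d| ^+ 2.
  rewrite [d * _]mulrC -[RHS]mulrA div_sqr_norm_sub1M ?(w_neq0 k) -?normr_gt0 //.
  by rewrite (norm_w k) [RHS]mulrA.
rewrite term_eq -recip_eq ReMr ?rpredV ?rpredX ?normr_real //.
have d_le : `|d| ^+ 2 <= (1 + b) ^+ 2.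
  by apply: lerXn2r; rewrite ?nnegrE // (le_trans _ norm_d).
apply: (@le_trans _ _ (tau / `|d| ^+ 2)).
  by rewrite ler_pM2l // lef_pV2 ?posrE ?exprn_gt0 ?d_le // (lt_le_trans d_gt0 norm_d).
rewrite ler_pM2r ?invr_gt0 ?exprn_gt0 //; apply: Re_ge.
by rewrite normfV norm_w invrK.
Qed.

Lemma sample_expr_bound : tau * (b ^+ N - 1) <= (1 + b) ^+ 2 * `|h.[v]|.
Proof.
have N_gt0 := prim_order_gt0 prim_xi.
have gap : `|v| ^+ N - rho ^+ N = rho ^+ N * (b ^+ N - 1).
  by rewrite norm_v exprMn mulrBr mulr1 mulrC.
have bN_gt1 : 0 < b ^+ N - 1 by rewrite subr_gt0 exprn_egt1 // -lt0n.
have gap_gt0 : 0 < `|v| ^+ N - rho ^+ N by rewrite gap mulr_gt0 ?exprn_gt0.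
have vN_neq : v ^+ N != rho ^+ N.
  apply: contraTneq gap_gt0 => e.
  by rewrite -normrX e normrX gtr0_norm // subrr ltxx.
have v_neq0 : v != 0 by rewrite -normr_gt0 norm_v mulr_gt0 // (lt_trans ltr01).
have size_h : (size h <= N)%N by rewrite (leq_trans (size_poly _ _)).
set T := \sum_(k < N) h.[w k] * w k / (w k - v).
have lower : N%:R * (tau / (1 + b) ^+ 2) <= 'Re T.
  have -> : N%:R * (tau / (1 + b) ^+ 2) = \sum_(k < N) tau / (1 + b) ^+ 2.
    by rewrite sumr_const card_ord mulr_natl.
  by rewrite raddf_sum; apply: ler_sum => k _; apply: Re_sample_ge.
have upper : 'Re T <= N%:R * (`|h.[v]| / (b ^+ N - 1)).
  apply: le_trans (leif_Re_Creal T).1 _.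
  rewrite /T sum_Cauchy_prim_root // normrM normfV !normrM normr_nat normrX.
  rewrite gtr0_norm //.
  have -> : N%:R * (`|h.[v]| / (b ^+ N - 1))
      = N%:R * rho ^+ N * `|h.[v]| / (`|v| ^+ N - rho ^+ N).
    by rewrite gap; field; rewrite ?expf_neq0 ?gt_eqF.
  apply: ler_wpM2l; first by rewrite !mulr_ge0 ?ler0n ?exprn_ge0 ?normr_ge0 ?ltW.
  have dist : `|v| ^+ N - rho ^+ N <= `|rho ^+ N - v ^+ N|.
    rewrite distrC; apply: le_trans (lerB_dist _ _).
    by rewrite normrX [`|rho ^+ N|]gtr0_norm ?exprn_gt0.
  by rewrite lef_pV2 ?posrE // (lt_le_trans gap_gt0 dist).
have b1_gt0 : 0 < (1 + b) ^+ 2 by rewrite exprn_gt0 // addr_gt0 // (lt_trans ltr01).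
have := le_trans lower upper.
rewrite ler_pM2l ?ltr0n // ler_pdivlMr // mulrAC ler_pdivrMr //.
by rewrite [_ * (1 + b) ^+ 2]mulrC.
Qed.

End Samples.

Lemma root_outside_expr_bound N : (0 < N)%N -> (n <= N)%N ->
  tau * (b ^+ N - 1) <= (1 + b) ^+ 2 * `|h.[v]|.
Proof.
move=> N_gt0 n_le_N; have N_neq0 : N%:R != 0 :> C by rewrite pnatr_eq0 -lt0n.
have [xi prim_xi] := prim_root_exists N_gt0 N_neq0.
exact: sample_expr_bound prim_xi.
Qed.

End RootOutsideCircle.

Lemma root_norm_lt (R : realType) (al tau : R) n (z0 : R[i]) (Q : {poly R[i]}) :
  0 < al -> 0 < tau -> (size Q <= n)%N ->
  (forall z, cmod z = al -> tau < complex.Re (Q.[z] * (z - z0) / z ^+ n)) ->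
  cmod z0 < al.
Proof.
move=> al_gt0 tau_gt0 size_Q Re_gt.
have [//|z0_out|z0_on] := ltrgtP (cmod z0) al; last first.
  by have := Re_gt z0 z0_on; rewrite subrr mulr0 mul0r ltNge ltW.
have Re_ge z : `|z| = al%:C -> tau%:C <= 'Re (Q.[z] * (z - z0) / z ^+ n).
  by move=> /complexI z_on; rewrite -complexRe lecR ltW ?Re_gt.
have tau_gt0C : 0 < tau%:C by rewrite ltcR.
have := root_outside_expr_bound _ tau_gt0C size_Q _ Re_ge; rewrite !ltcR => /(_ al_gt0 z0_out).
set b := `|z0| / _; set c := _ * `|_|.
have b_gt1 : 1 < b by rewrite ltr_pdivlMr ?ltcR // mul1r ltcR.
have c_ge0 : 0 <= c.
  by rewrite mulr_ge0 // exprn_ge0 // addr_ge0 // ltW // (lt_trans ltr01).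
have c_real : tau%:C^-1 * c + 1 \is Num.real.
  by rewrite gtr0_real // ltr_wpDl // mulr_ge0 // invr_ge0 ltW.
have [m c_lt] := complex_expr_unbounded b_gt1 c_real.
move=> /(_ (m + n).+1 isT (leq_trans (leq_addl m n) (leqnSn _))) bound.
suff : c < tau%:C * (b ^+ (m + n).+1 - 1) by move/lt_le_trans/(_ bound); rewrite ltxx.
rewrite -ltr_pdivrMl // ltrBrDr (lt_le_trans c_lt) // ler_eXn2l //.
exact: leq_trans (leq_addr n m) (leqnSn _).
Qed.

Lemma char_poly_castmx (F : comNzRingType) m k (e : m = k) (A : 'M[F]_m) :
  char_poly (castmx (e, e) A) = char_poly A.
Proof. by case: k / e; rewrite castmx_id. Qed.

Lemma castmx_companionmx (F : nzRingType) (p : {poly F}) m (e : (size p).-1 = m)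
    (i j : 'I_m) :
  castmx (e, e) (companionmx p) i j =
  if (i == m.-1 :> nat) then - p`_j else (i.+1 == j :> nat)%:R.
Proof. by case: m / e i j => i j; rewrite castmx_id mxE. Qed.

Section CompanionPolynomial.
Variables (R : realType) (n : nat) (a : 'I_n -> R).

Lemma size_sum_p_a : (size (\sum_(i < n) (a i)%:P * 'X^(n - i.+1))%R <= n)%N.
Proof.
apply: leq_trans (size_sum _ _ _) _; apply/bigmax_leqP => i _.
apply: leq_trans (size_polyMleq _ _) _; rewrite size_polyXn.
have := size_polyC_leq1 (a i); have := ltn_ord i; case: (size _) => [|[|//]] /=; lia.
Qed.

Lemma size_p_a : size (p_a a) = n.+1.
Proof. by rewrite /p_a size_polyDl size_polyXn // ltnS size_sum_p_a. Qed.

Lemma p_a_monic : p_a a \is monic.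
Proof.
by rewrite monicE /p_a lead_coefDl ?lead_coefXn // size_polyXn ltnS size_sum_p_a.
Qed.

Lemma coef_p_a (j : 'I_n) : (p_a a)`_j = a (rev_ord j).
Proof.
rewrite /p_a coefD coefXn ltn_eqF // add0r coef_sum.
rewrite (bigD1 (rev_ord j)) //= coefCM coefXn big1 ?addr0 => [|i i_neq].
  by rewrite subnS subKn ?eqxx ?mulr1 //; have := ltn_ord j; lia.
rewrite coefCM coefXn; case: eqP => [j_eq | _]; last by rewrite mulr0.
by case/eqP: i_neq; apply: val_inj => /=; have := ltn_ord i; lia.
Qed.

Lemma size_p_aC : size (p_aC a) = n.+1.
Proof. by rewrite /p_aC size_map_inj_poly ?size_p_a //; exact: complexI. Qed.

Lemma char_poly_CC : char_poly (CC a) = p_a a.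
Proof.
have e : (size (p_a a)).-1 = n by rewrite size_p_a.
have -> : CC a = castmx (e, e) (companionmx (p_a a)).
  apply/matrixP => i j; rewrite castmx_companionmx /CC mxE.
  have -> : (i.+1 < n)%N = ~~ (i == n.-1 :> nat).
    by apply/idP/idP; have := ltn_ord i; lia.
  case: eqP => _ /=; first by rewrite coef_p_a.
  by rewrite eq_sym; case: eqP.
by rewrite char_poly_castmx companionmxK // p_a_monic.
Qed.

End CompanionPolynomial.

Lemma spectral_radius_lt (R : realType) n (A : 'M[R]_n) al : 0 < al ->
  (forall z, root (map_poly (real_complex R) (char_poly A)) z -> cmod z < al) ->
  spectral_radius A < al.
Proof.
move=> al_gt0; set P := map_poly (real_complex R) (char_poly A) => roots_lt.
have P_neq0 : P != 0 by rewrite map_poly_eq0 monic_neq0 ?char_poly_monic.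
have [rs P_eq] := closed_field_poly_normal P.
have root_rs z : root P z = (z \in rs).
  by rewrite P_eq rootZ ?lead_coef_eq0 // root_prod_XsubC.
have eig_rs z : eigenvalue (map_mx (fun x => x%:C) A) z -> z \in rs.
  by rewrite eigenvalue_root_char -root_rs /P (map_char_poly (real_complex R)).
pose M := \big[Order.max/0]_(z <- rs) cmod z.
apply: (@le_lt_trans _ _ M).
  rewrite /spectral_radius; set S := (fun r => _).
  have [->|/set0P S_ne] := eqVneq S set0; first by rewrite sup0 bigmax_ge_id.
  by apply: ge_sup => // _ [z [/eig_rs z_rs ->]]; apply: le_bigmax_seq.
by rewrite /M big_seq; apply: bigmax_lt => // z; rewrite -root_rs => /roots_lt.
Qed.

Theorem lemma4p2 (R : realType) (tau0 tau1 tau2 alpha : R) (n : nat)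
  (a : 'I_n -> R) :
  0 < tau0 -> 0 < tau1 -> 0 < tau2 -> 0 < alpha ->
  B_alpha tau0 tau1 tau2 alpha a ->
  (forall z : R[i], root (p_aC a) z -> cmod z < alpha) /\
  spectral_radius (CC a) < alpha.
Proof.
move=> _ tau1_gt0 _ al_gt0 B_a.
have roots_lt z0 : root (p_aC a) z0 -> cmod z0 < alpha.
  case/factor_theorem => Q p_eq.
  have size_Q : (size Q <= n)%N.
    have := size_p_aC a; rewrite p_eq; have [->|Q_neq0] := eqVneq Q 0.
      by rewrite mul0r size_poly0.
    by rewrite size_Mmonic ?monicXsubC // size_XsubC addn2 => -[->].
  apply: (root_norm_lt al_gt0 tau1_gt0 size_Q) => z z_on.
  by have [_ [+ _]] := B_a z z_on; rewrite p_eq hornerM hornerXsubC.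
split=> //; apply: spectral_radius_lt => // z.
by rewrite char_poly_CC; apply: roots_lt.
Qed.
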